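(* Let $\mathcal{X}$ be a finite set of actions, $\mathcal{Y}$ a finite set of responses, $\mathcal{H}\subseteq\mathcal{Y}^{\mathcal{X}}$, $\mathrm{cost}:\mathcal{X}\times\mathcal{Y}\to\mathbb{R}_+$. Let $f:2^{\mathcal{X}\times\mathcal{Y}}\to\mathbb{R}_+$, $Q>0$, $\eta>0$ be such that $f$ is monotone non-decreasing and submodular, $f(\emptyset)=0$, for every $S$, $f(S)\ge Q-\eta$ implies $f(S)\ge Q$, and $f$ is consistency-aware for $Q$. Let $\alpha\ge1$ and let $\mathcal{A}$ be an $\alpha$-approximate greedy algorithm for the utility function $u^f$. Then $$\mathrm{cost}(\mathcal{A})\le 2\min(g_{\mathrm{cost}},R_{\mathrm{cost}})\cdot\alpha\cdot(\log(Q/\eta)+1)\cdot\mathrm{OPT}.$$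
   Context: The true state is an unknown $h^*\in\mathcal{H}$. An interactive algorithm $\mathcal{A}$, given the set $S$ of pairs observed so far, outputs either an action $\mathcal{A}(S)\in\mathcal{X}$ (yielding $(x,h^*(x))$, added to $S$) or terminates. $S^h[\mathcal{A}]$ is the set collected until termination when $h^*=h$; $\mathrm{cost}(S)=\sum_{(x,y)\in S}\mathrm{cost}(x,y)$; $\mathrm{cost}(\mathcal{A})=\max_{h\in\mathcal{H}}\mathrm{cost}(S^h[\mathcal{A}])$; $\mathrm{OPT}$ is the minimum of $\mathrm{cost}(\mathcal{A})$ over interactive algorithms with $f(S^h[\mathcal{A}])\ge Q$ for all $h\in\mathcal{H}$ ($\infty$ if none). Version space $V(S)=\{h\in\mathcal{H}\mid\forall(x,y)\in S,\ y=h(x)\}$. $f$ is consistency-aware for $Q$ if $f(S)\ge Q$ whenever $V(S)=\emptyset$. $\delta_g(z\mid A)=g(A\cup\{z\})-g(A)$; $u^f(x,S)=\min_{h\in V(S)}\frac{\delta_{\min(f,Q)}((x,h(x))\mid S)}{\mathrm{cost}(x,h(x))}$. $\mathcal{A}$ is an $\alpha$-approximate greedy algorithm for $u$ if for all $S$: if $f(S)\ge Q$ then $\mathcal{A}$ terminates on $S$, otherwise $\mathcal{A}(S)\in\mathcal{X}$ and $u(\mathcal{A}(S),S)\ge\frac1\alpha\max_{x}u(x,S)$. Cost ratio $R_{\mathrm{cost}}=\max_x\frac{\max_y\mathrm{cost}(x,y)}{\min_y\mathrm{cost}(x,y)}$. With $\phi(x)$ the second-smallest value of the multiset $\{\mathrm{cost}(x,y)\mid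 y\in\mathcal{Y}\}$, $\phi_{\min}=\min_x\phi(x)$, $c_{\max}=\max_{(x,y)}\mathrm{cost}(x,y)$, the global second-smallest cost ratio is $g_{\mathrm{cost}}=c_{\max}/\phi_{\min}$. *)

From HB Require Import structures.
From mathcomp Require Import all_boot all_order all_algebra.
From mathcomp Require Import boolp reals exp.
Set Implicit Arguments. Unset Strict Implicit. Unset Printing Implicit Defensive.
Import Order.TTheory GRing.Theory Num.Theory.
Local Open Scope ring_scope.

Section Interactive.
Variables (R : realType) (X Y : finType).

(* minimum / maximum of a finite list of reals (value 0 on the empty list;
   every use below is on a nonempty list or irrelevant) *)
Definition minseq (s : seq R) : R := foldr Num.min (head 0 s) s.
Definition maxseq (s : seq R) : R := foldr Num.max (head 0 s) s.

(* an interactive algorithm: given the set S of observed pairs, either an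
   action (Some x) or termination (None) *)
Definition algo := {set X * Y} -> option X.

Fixpoint run (A : algo) (h : {ffun X -> Y}) (k : nat) : {set X * Y} :=
  match k with
  | 0 => set0
  | k'.+1 => let S := run A h k' in
             match A S with
             | Some x => (x, h x) |: S
             | None => S
             end
  end.

Definition terminates_on (A : algo) (h : {ffun X -> Y}) : Prop :=
  exists k, A (run A h k) == None.

(* S^h[A]: the set collected until termination (setT is a junk value used
   only when A never terminates on h) *)
Definition Sh (A : algo) (h : {ffun X -> Y}) : {set X * Y} :=
  match pselect (terminates_on A h) with
  | left P => run A h (ex_minn P)
  | right _ => setT
  end.

Variable cost : X -> Y -> R.
Variable H : {set {ffun X -> Y}}.

Definition costS (S : {set X * Y}) : R := \sum_(p in S) cost p.1 p.2.

Definition costA (A : algo) : R := maxseq [seq costS (Sh A h) | h <- enum H].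

Definition terminates (A : algo) : Prop := forall h, h \in H -> terminates_on A h.

Definition feasible (f : {set X * Y} -> R) (Q : R) (A : algo) : Prop :=
  terminates A /\ forall h, h \in H -> Q <= f (Sh A h).

Definition V (S : {set X * Y}) : {set {ffun X -> Y}} :=
  [set h in H | [forall p in S, h p.1 == p.2]].

Definition consistency_aware (f : {set X * Y} -> R) (Q : R) : Prop :=
  forall S, V S = set0 -> Q <= f S.

Definition monotone (f : {set X * Y} -> R) : Prop :=
  forall A B : {set X * Y}, A \subset B -> f A <= f B.

Definition delta (g : {set X * Y} -> R) (z : X * Y) (A : {set X * Y}) : R :=
  g (z |: A) - g A.

Definition submodular (f : {set X * Y} -> R) : Prop :=
  forall (A B : {set X * Y}) (z : X * Y), A \subset B -> z \notin B ->
    delta f z B <= delta f z A.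

Definition utility (f : {set X * Y} -> R) (Q : R) (x : X) (S : {set X * Y}) : R :=
  minseq [seq delta (fun T => Num.min (f T) Q) (x, h x) S / cost x (h x)
         | h : {ffun X -> Y} <- enum (V S)].

Definition approx_greedy (f : {set X * Y} -> R) (Q alpha : R)
    (u : X -> {set X * Y} -> R) (A : algo) : Prop :=
  forall S : {set X * Y},
    (Q <= f S -> A S = None) /\
    (f S < Q -> exists x, A S = Some x /\
        alpha^-1 * maxseq [seq u y S | y <- enum X] <= u x S).

Definition R_cost : R :=
  maxseq [seq maxseq [seq cost x y | y <- enum Y] /
              minseq [seq cost x y | y <- enum Y] | x <- enum X].

Definition phi (x : X) : R := nth 0 (sort <=%R [seq cost x y | y <- enum Y]) 1.
Definition phi_min : R := minseq [seq phi x | x <- enum X].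
Definition c_max : R := maxseq [seq cost p.1 p.2 | p <- enum [set: X * Y]].
Definition g_cost : R := c_max / phi_min.

End Interactive.

(* Let K = min(g_cost, R_cost), let OPT be the cost of a feasible algorithm A'
   and M = alpha * 2 K OPT.  Whenever f S < Q, the gap Q - f S is at most
   max_x u(x, S) * 2 K OPT: answer every action x by a hypothesis realising
   u(x, S) and run A' on these answers until it stops or refutes the version
   space.  The collected pairs T reach Q (by feasibility, resp. consistency
   awareness), so by submodularity of min(f, Q) the gap is at most the sum of
   their gains, i.e. at most max_x u(x, S) * cost T.  All of T but its last
   query is also collected by A' on a hypothesis of H, hence costs at most OPT.
   The last query costs at most R_cost times a response paid by OPT, and at
   most g_cost * phi_min, where phi_min <= OPT: the hypothesis realising the
   utility of that action is refuted by the run, so at an earlier query it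
   and a hypothesis consistent with the run give two different responses,
   both paid by OPT.
   Consequently a greedy step paying c shrinks the gap Q - min(f, Q) by a
   factor exp(-c / M).  The gap exceeds eta until the last step, so the greedy
   pays less than M ln(Q / eta) before it and at most M on it. *)

From HB Require Import structures.
From mathcomp Require Import all_boot all_order all_algebra.
From mathcomp Require Import boolp reals sequences exp.
From mathcomp Require Import lra ring.
Import Order.TTheory GRing.Theory Num.Theory.
Local Open Scope ring_scope.

Set Implicit Arguments.
Unset Strict Implicit.
Unset Printing Implicit Defensive.

Section SeqExtrema.
Variable R : realType.
Implicit Types (s : seq R) (x B : R).

Lemma maxseq_ge s x : x \in s -> x <= maxseq s.
Proof.
rewrite /maxseq; move: (head 0 s) => a.
elim: s => //= y s IH; rewrite in_cons le_max => /orP[/eqP->|/IH->].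
  by rewrite lexx.
by rewrite orbT.
Qed.

(* [maxseq [::] = 0], hence the hypothesis [0 <= B]. *)
Lemma maxseq_le s B : 0 <= B -> {in s, forall x, x <= B} -> maxseq s <= B.
Proof.
move=> B_ge0 sB; rewrite /maxseq.
have : head 0 s <= B by case: s sB => //= y s sB; rewrite sB ?mem_head.
move: (head 0 s) => a aB; elim: s sB => //= y s IH sB.
rewrite ge_max sB ?mem_head //= IH // => z zs.
by rewrite sB // in_cons zs orbT.
Qed.

Lemma maxseq_ge0 s : {in s, forall x, 0 <= x} -> 0 <= maxseq s.
Proof.
case: s => [|y s] s_ge0; first by rewrite /maxseq.
exact: le_trans (s_ge0 y (mem_head _ _)) (maxseq_ge (mem_head _ _)).
Qed.

Lemma minseq_le s x : x \in s -> minseq s <= x.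
Proof.
rewrite /minseq; move: (head 0 s) => a.
elim: s => //= y s IH; rewrite in_cons ge_min => /orP[/eqP->|/IH->].
  by rewrite lexx.
by rewrite orbT.
Qed.

Lemma minseq_ge0 s : {in s, forall x, 0 <= x} -> 0 <= minseq s.
Proof.
move=> s_ge0; rewrite /minseq.
have : 0 <= head 0 s by case: s s_ge0 => //= y s s_ge0; rewrite s_ge0 ?mem_head.
move: (head 0 s) => a a_ge0; elim: s s_ge0 => //= y s IH s_ge0.
rewrite le_min s_ge0 ?mem_head //= IH // => z zs.
by rewrite s_ge0 // in_cons zs orbT.
Qed.

Lemma minseq_mem s : s != [::] -> minseq s \in s.
Proof.
have foldr_mem (a : R) (t : seq R) : foldr Num.min a t \in a :: t.
  elim: t => [|y t IH] /=; first exact: mem_head.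
  rewrite /Num.min; case: ifP => _; first by rewrite !inE eqxx orbT.
  by move: IH; rewrite !inE => /orP[->|->]; rewrite ?orbT.
case: s => // a s _; have := foldr_mem a (a :: s); rewrite /minseq /= in_cons.
by case/orP=> [/eqP->|]; rewrite ?mem_head.
Qed.

End SeqExtrema.

Lemma nonincreasing_nat_stable (v : nat -> nat) :
  (forall m n, (m <= n)%N -> (v n <= v m)%N) ->
  exists k, forall m, (k <= m)%N -> v m = v k.
Proof.
move=> v_dec.
suff: forall n k, (v k <= n)%N -> exists k', forall m, (k' <= m)%N -> v m = v k'.
  by move/(_ (v 0%N) 0%N (leqnn _)).
elim=> [|n IH] k vk.
  by exists k => m /v_dec; rewrite leqn0 in vk; rewrite (eqP vk) leqn0 => /eqP.
have [[m [km vm]]|stable] := pselect (exists m, (k <= m)%N /\ v m != v k).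
  have vmk : (v m < v k)%N by rewrite ltn_neqAle vm v_dec.
  by apply: (IH m); rewrite -ltnS (leq_trans vmk vk).
by exists k => m km; apply/eqP/negPn/negP => vm; apply: stable; exists m.
Qed.

Lemma gap_decay (R : realType) (Q a b c M : R) : 0 < M -> a <= Q ->
  c * (Q - a) <= M * (b - a) -> Q - b <= (Q - a) * expR (- (c / M)).
Proof.
move=> M_gt0 aQ step; apply: le_trans (_ : Q - b <= (Q - a) * (1 - c / M)) _.
  have : (Q - a) * (c / M) <= b - a.
    by rewrite mulrA [(Q - a) * c]mulrC ler_pdivrMr // [leRHS]mulrC.
  lra.
by rewrite ler_wpM2l ?subr_ge0 // expR_ge1Dx.
Qed.

Lemma lt_mul_ln_of_lt_expR (R : realType) (Q eta C M : R) : 0 < eta -> 0 < M ->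
  eta < Q * expR (- (C / M)) -> C < M * ln (Q / eta).
Proof.
move=> eta_gt0 M_gt0 eta_lt.
have Q_gt0 : 0 < Q by rewrite -(pmulr_lgt0 _ (expR_gt0 (- (C / M)))) (lt_trans eta_gt0).
move: eta_lt; rewrite -ltr_ln ?posrE ?mulr_gt0 ?expR_gt0 //.
rewrite lnM ?posrE ?expR_gt0 // expRK ln_div ?posrE // => ln_lt.
by rewrite -ltr_pdivrMl // mulrC; lra.
Qed.

Section Runs.
Variables X Y : finType.
Implicit Types (A : algo X Y) (g h : {ffun X -> Y}) (S : {set X * Y}).

Definition agrees h S := forall p, p \in S -> h p.1 = p.2.

Lemma runS A h k : run A h k.+1 =
  if A (run A h k) is Some x then (x, h x) |: run A h k else run A h k.
Proof. by []. Qed.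

Lemma run_some A h k x :
  A (run A h k) = Some x -> run A h k.+1 = (x, h x) |: run A h k.
Proof. by rewrite runS => ->. Qed.

Lemma run_subSn A h k : run A h k \subset run A h k.+1.
Proof. by rewrite runS; case: (A _) => // x; exact: subsetUr. Qed.

Lemma run_sub A h j k : (j <= k)%N -> run A h j \subset run A h k.
Proof.
move/subnK <-; elim: (k - j)%N => // n IH.
by rewrite addSn; exact: subset_trans IH (run_subSn _ _ _).
Qed.

Lemma agrees_run A h k : agrees h (run A h k).
Proof.
elim: k => [|k IH] p /=; first by rewrite inE.
case: (A _) => [x|]; last exact: IH.
by rewrite in_setU1 => /orP[/eqP-> //|/IH].
Qed.

Lemma run_agree A g h k : agrees h (run A g k) ->
  forall j, (j <= k)%N -> run A h j = run A g j.
Proof.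
move=> hg; elim=> // j IH jk; rewrite !runS IH ?(ltnW jk) //.
case Aj: (A _) => [x|] //.
have : (x, g x) \in run A g k.
  by apply: subsetP (run_sub _ _ jk) _ _; rewrite (run_some Aj) setU11.
by move/hg => /= ->.
Qed.

Lemma first_disagreement A g h k : ~ agrees h (run A g k) ->
  exists j x, [/\ (j < k)%N, A (run A g j) = Some x, agrees h (run A g j)
                & h x != g x].
Proof.
elim: k => [|k IH] hg; first by exfalso; apply: hg => p; rewrite inE.
have [hk|hk] := pselect (agrees h (run A g k)); last first.
  by have [j [x [jk Aj hj hx]]] := IH hk; exists j, x; split=> //; exact: ltnW.
move: hg; rewrite runS; case Ak: (A _) => [x|] // hg.
exists k, x; split=> //; apply/eqP => hx; apply: hg => p.
by rewrite in_setU1 => /orP[/eqP-> //|/hk].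
Qed.

Lemma Sh_spec A h : terminates_on A h ->
  exists k, [/\ Sh A h = run A h k, A (run A h k) = None &
    forall j, (j < k)%N -> A (run A h j) != None].
Proof.
move=> hT; rewrite /Sh; case: pselect => // {}hT.
case: ex_minnP => k /eqP Ak k_min; exists k; split=> // j jk.
by apply/eqP => Aj; move: (k_min j (introT eqP Aj)); rewrite leqNgt jk.
Qed.

Lemma Sh_eq A h k : A (run A h k) = None ->
  (forall j, (j < k)%N -> A (run A h j) != None) -> Sh A h = run A h k.
Proof.
move=> Ak live; have hT : terminates_on A h by exists k; rewrite Ak.
have [m [-> Am m_live]] := Sh_spec hT.
case: (ltngtP m k) => [mk|km|-> //]; first by have := live m mk; rewrite Am.
by have := m_live k km; rewrite Ak.
Qed.

Lemma Sh_sup A h k : terminates_on A h ->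
  (forall j, (j < k)%N -> A (run A h j) != None) -> run A h k \subset Sh A h.
Proof.
move=> hT live; have [m [-> Am _]] := Sh_spec hT; apply: run_sub.
by rewrite leqNgt; apply/negP => /live; rewrite Am.
Qed.

Lemma Sh_agree_run A g h k : agrees h (run A g k) -> A (run A g k) = None ->
  (forall j, (j < k)%N -> A (run A g j) != None) -> Sh A h = run A g k.
Proof.
move=> hg Ak live; have eq_run := run_agree hg.
rewrite -(eq_run k (leqnn k)); apply: Sh_eq; first by rewrite (eq_run k (leqnn k)).
by move=> j jk; rewrite (eq_run j (ltnW jk)) live.
Qed.

Lemma query_sub_Sh A g h j x : terminates_on A h -> agrees h (run A g j) ->
  (forall i, (i < j)%N -> A (run A g i) != None) -> A (run A g j) = Some x ->
  (x, h x) |: run A g j \subset Sh A h.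
Proof.
move=> hT hg live Ax; have eq_run := run_agree hg.
have Ahx : A (run A h j) = Some x by rewrite (eq_run j (leqnn j)).
rewrite -(eq_run j (leqnn j)) -(run_some Ahx); apply: Sh_sup hT _ => i.
rewrite ltnS leq_eqVlt => /orP[/eqP->|ij]; first by rewrite Ahx.
by rewrite (eq_run i (ltnW ij)) live.
Qed.

End Runs.

Section VersionSpace.
Variables (X Y : finType) (H : {set {ffun X -> Y}}).
Implicit Types (S T : {set X * Y}) (h : {ffun X -> Y}).

Lemma V_memP S h : reflect (h \in H /\ agrees h S) (h \in V H S).
Proof.
rewrite inE; apply: (iffP andP) => -[hH hS]; split=> //.
  by move=> p /(forall_inP hS)/eqP.
by apply/forall_inP => p /hS ->.
Qed.

Lemma V_subset S T : S \subset T -> V H T \subset V H S.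
Proof.
move=> ST; apply/subsetP => h /V_memP[hH hT]; apply/V_memP; split=> // p pS.
exact/hT/(subsetP ST).
Qed.

End VersionSpace.

Section Costs.
Variables (R : realType) (X Y : finType) (cost : X -> Y -> R).
Hypothesis cost_gt0 : forall x y, 0 < cost x y.
Implicit Types (S T : {set X * Y}) (z : X * Y).

Lemma costS_ge0 S : 0 <= costS cost S.
Proof. by apply: sumr_ge0 => p _; exact: ltW. Qed.

Lemma costS_sub S T : S \subset T -> costS cost S <= costS cost T.
Proof.
move=> ST; rewrite /costS [leRHS](big_setID S) /= (setIidPr ST) lerDl.
by apply: sumr_ge0 => p _; exact: ltW.
Qed.

Lemma costS_setU1 z S :
  z \notin S -> costS cost (z |: S) = cost z.1 z.2 + costS cost S.
Proof. by move=> zS; rewrite /costS big_setU1. Qed.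

Lemma costS_setU1_le z S : costS cost (z |: S) <= cost z.1 z.2 + costS cost S.
Proof.
have [zS|zS] := boolP (z \in S); last by rewrite costS_setU1.
by rewrite (setUidPr _) ?sub1set // lerDr ltW.
Qed.

Lemma cost_le_costS z S : z \in S -> cost z.1 z.2 <= costS cost S.
Proof.
by move=> zS; have := @costS_sub [set z] S; rewrite sub1set zS /costS big_set1 => /(_ isT).
Qed.

Lemma R_cost_le x y y' : cost x y <= R_cost cost * cost x y'.
Proof.
set L := [seq cost x y0 | y0 <- enum Y].
have inL y0 : cost x y0 \in L by apply: map_f; rewrite mem_enum.
have min_gt0 : 0 < minseq L.
  have /mapP[y0 _ ->] : minseq L \in L.
    by apply: minseq_mem; apply/eqP => L0; move: (inL y); rewrite L0.
  exact: cost_gt0.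
have ratio_le : maxseq L / minseq L <= R_cost cost.
  by apply: maxseq_ge; apply/mapP; exists x; rewrite ?mem_enum.
have max_ge0 : 0 <= maxseq L := le_trans (ltW (cost_gt0 x y)) (maxseq_ge (inL y)).
apply: le_trans (maxseq_ge (inL y)) _.
rewrite -(divfK (lt0r_neq0 min_gt0) (maxseq L)).
by apply: ler_pM => //; [exact: divr_ge0 (ltW min_gt0) | exact: ltW | exact: minseq_le].
Qed.

Lemma c_max_ge x y : cost x y <= c_max cost.
Proof. by apply: maxseq_ge; apply/mapP; exists (x, y); rewrite ?mem_enum ?inE. Qed.

Lemma phi_min_le x : phi_min cost <= phi cost x.
Proof. by apply: minseq_le; apply: map_f; rewrite mem_enum. Qed.

Hypothesis Y2 : (1 < #|Y|)%N.

Lemma phi_mem x : exists y, phi cost x = cost x y.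
Proof.
have : nth 0 (sort <=%R [seq cost x y | y <- enum Y]) 1 \in sort <=%R [seq cost x y | y <- enum Y].
  by apply: mem_nth; rewrite size_sort size_map -cardE.
by rewrite mem_sort => /mapP[y _ phi_y]; exists y.
Qed.

Lemma phi_le_max x y y' : y != y' -> phi cost x <= Num.max (cost x y) (cost x y').
Proof.
move=> yy'; rewrite leNgt gt_max; apply/negP => /andP[lt_y lt_y'].
set L := [seq cost x y0 | y0 <- enum Y].
have two_below : (2 <= count (< phi cost x) L)%N.
  have yY : y \in enum Y by rewrite mem_enum.
  have y'Y : y' \in rem y (enum Y).
    by rewrite mem_rem_uniq ?enum_uniq // inE eq_sym yy' mem_enum.
  rewrite count_map (permP (perm_to_rem yY)) /= (permP (perm_to_rem y'Y)) /=.
  by rewrite /preim /= lt_y lt_y'.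
rewrite -(count_sort <=%R) in two_below.
have := sort_sorted (@le_total _ R) L.
have : size (sort <=%R L) = #|Y| by rewrite size_sort size_map -cardE.
rewrite /phi -/L in two_below *.
case: (sort _ L) two_below => [|a [|b t]] /= two_below size_st;
  try by move: Y2; rewrite -size_st.
move=> /andP[_ path_bt]; have /allP b_le := order_path_min (@le_trans _ R) path_bt.
have none_below : count (< b) t = 0%N.
  by rewrite (eq_in_count (a2 := pred0)) ?count_pred0 // => c /b_le bc /=; rewrite ltNge bc.
by move: two_below; rewrite none_below ltxx /= addn0; case: (a < b).
Qed.

Lemma phi_min_le_costs x y y' B : y != y' ->
  cost x y <= B -> cost x y' <= B -> phi_min cost <= B.
Proof.
move=> yy' yB y'B; apply: le_trans (phi_min_le x) _.
by apply: le_trans (phi_le_max x yy') _; rewrite ge_max yB y'B.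
Qed.

Variable x0 : X.

Lemma phi_min_gt0 : 0 < phi_min cost.
Proof.
have /mapP[x _ ->] : phi_min cost \in [seq phi cost x | x <- enum X].
  by apply: minseq_mem; rewrite -size_eq0 size_map -cardE -lt0n; apply/card_gt0P; exists x0.
by have [y ->] := phi_mem x; exact: cost_gt0.
Qed.

Lemma cost_le_g_phi_min x y : cost x y <= g_cost cost * phi_min cost.
Proof. by rewrite /g_cost divfK ?lt0r_neq0 ?phi_min_gt0 //; exact: c_max_ge. Qed.

Lemma R_cost_ge1 : 1 <= R_cost cost.
Proof.
have /card_gt0P[y _] : (0 < #|Y|)%N by exact: ltnW.
by have := R_cost_le x0 y y; rewrite ler_pMl ?cost_gt0.
Qed.

Lemma g_cost_ge1 : 1 <= g_cost cost.
Proof.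
rewrite /g_cost ler_pdivlMr ?phi_min_gt0 // mul1r.
have [y phi_y] := phi_mem x0.
by apply: le_trans (phi_min_le x0) _; rewrite phi_y c_max_ge.
Qed.

Lemma cost_ratio_ge1 : 1 <= Num.min (g_cost cost) (R_cost cost).
Proof. by rewrite le_min g_cost_ge1 R_cost_ge1. Qed.

End Costs.

Section Submodular.
Variables (R : realType) (X Y : finType) (g : {set X * Y} -> R).
Hypothesis g_mono : monotone g.
Implicit Types (S T : {set X * Y}) (z : X * Y).

Lemma delta_ge0 z S : 0 <= delta g z S.
Proof. by rewrite subr_ge0; apply: g_mono; exact: subsetUr. Qed.

Hypothesis g_sub : submodular g.

Lemma submodular_gain_le_sum S T : g (S :|: T) - g S <= \sum_(z in T) delta g z S.
Proof.
suff gain_seq s : g (S :|: [set z in s]) - g S <= \sum_(z <- s) delta g z S.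
  by have := gain_seq (enum T); rewrite set_enum big_enum.
elim: s => [|z s IH]; first by rewrite set_nil setU0 subrr big_nil.
rewrite set_cons setUCA big_cons.
have step : g (z |: (S :|: [set x in s])) - g (S :|: [set x in s]) <= delta g z S.
  have [zSs|zSs] := boolP (z \in S :|: [set x in s]).
    by rewrite (setUidPr _) ?sub1set // subrr delta_ge0.
  exact: g_sub (subsetUl S _) zSs.
by move: step IH; rewrite /delta; lra.
Qed.

End Submodular.

Section Truncation.
Variables (R : realType) (X Y : finType) (f : {set X * Y} -> R) (Q : R).
Hypothesis f_mono : monotone f.
Local Notation fQ := (fun T => Num.min (f T) Q).

Lemma truncation_monotone : monotone fQ.
Proof. by move=> S T /f_mono fST; rewrite le_min !ge_min fST lexx orbT. Qed.

Hypothesis f_sub : submodular f.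

Lemma truncation_submodular : submodular fQ.
Proof.
move=> S T z ST zT; have := f_sub ST zT; rewrite /delta.
have := f_mono ST; have := f_mono (setUS [set z] ST).
have := f_mono (subsetUr [set z] S); have := f_mono (subsetUr [set z] T).
rewrite !minEle; case: (leP (f S) Q); case: (leP (f T) Q);
  case: (leP (f (z |: S)) Q); case: (leP (f (z |: T)) Q); lra.
Qed.

End Truncation.

Section Utility.
Variables (R : realType) (X Y : finType) (H : {set {ffun X -> Y}})
  (cost : X -> Y -> R) (f : {set X * Y} -> R) (Q : R).
Hypotheses (cost_gt0 : forall x y, 0 < cost x y) (f_mono : monotone f).
Local Notation fQ := (fun T => Num.min (f T) Q).
Local Notation u := (utility cost H f Q).
Implicit Types (S : {set X * Y}) (h : {ffun X -> Y}).

Lemma utility_ge0 x S : 0 <= u x S.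
Proof.
apply: minseq_ge0 => _ /mapP[h _ ->].
by apply: divr_ge0; [apply: delta_ge0; exact: truncation_monotone | exact: ltW].
Qed.

Lemma utility_le x S h : h \in V H S -> u x S <= delta fQ (x, h x) S / cost x (h x).
Proof. by move=> hV; apply: minseq_le; apply: map_f; rewrite mem_enum. Qed.

Lemma utility_attained x S : V H S != set0 ->
  exists h, h \in V H S /\ u x S = delta fQ (x, h x) S / cost x (h x).
Proof.
move=> VS; have /mapP[h hV ->] :
    u x S \in [seq delta fQ (x, h x) S / cost x (h x) | h <- enum (V H S)].
  by apply: minseq_mem; rewrite -size_eq0 size_map -cardE cards_eq0.
by exists h; rewrite mem_enum in hV.
Qed.

Lemma max_utility_ge x S : u x S <= maxseq [seq u y S | y <- enum X].
Proof. by apply: maxseq_ge; apply: map_f; rewrite mem_enum. Qed.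

Lemma max_utility_ge0 S : 0 <= maxseq [seq u y S | y <- enum X].
Proof. by apply: maxseq_ge0 => _ /mapP[x _ ->]; exact: utility_ge0. Qed.

End Utility.

Section Adversary.
Variables (R : realType) (X Y : finType) (H : {set {ffun X -> Y}})
  (cost : X -> Y -> R) (f : {set X * Y} -> R) (Q : R) (A' : algo X Y) (x0 : X).
Hypotheses (cost_gt0 : forall x y, 0 < cost x y) (Y2 : (1 < #|Y|)%N)
  (f_mono : monotone f) (f_sub : submodular f) (f_ca : consistency_aware H f Q)
  (A'_feas : feasible H f Q A').
Implicit Types (S T : {set X * Y}) (g h : {ffun X -> Y}).
Local Notation OPT := (costA cost H A').
Local Notation K := (Num.min (g_cost cost) (R_cost cost)).
Local Notation fQ := (fun T => Num.min (f T) Q).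
Local Notation u := (utility cost H f Q).

Lemma costS_Sh_le_OPT h : h \in H -> costS cost (Sh A' h) <= OPT.
Proof. by move=> hH; apply: maxseq_ge; apply: map_f; rewrite mem_enum. Qed.

Lemma cost_le_OPT h z : h \in H -> z \in Sh A' h -> cost z.1 z.2 <= OPT.
Proof. by move=> hH zS; exact: le_trans (cost_le_costS cost_gt0 zS) (costS_Sh_le_OPT hH). Qed.

Lemma OPT_ge0 : 0 <= OPT.
Proof. by apply: maxseq_ge0 => _ /mapP[h _ ->]; exact: costS_ge0. Qed.

Lemma OPT_le_K_OPT : OPT <= K * OPT.
Proof. exact: ler_peMl OPT_ge0 (cost_ratio_ge1 cost_gt0 Y2 x0). Qed.

Lemma query_cost_le_OPT g h j x : h \in H ->
  (forall i, (i < j)%N -> A' (run A' g i) != None) -> A' (run A' g j) = Some x ->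
  agrees h (run A' g j) -> cost x (h x) <= OPT.
Proof.
move=> hH live Ax hg; apply: (cost_le_OPT (z := (x, h x)) hH).
by apply: subsetP (query_sub_Sh (A'_feas.1 h hH) hg live Ax) _ _; exact: setU11.
Qed.

Lemma phi_min_le_OPT g h h' j x : h \in H -> h' \in H ->
  (forall i, (i < j)%N -> A' (run A' g i) != None) -> A' (run A' g j) = Some x ->
  agrees h (run A' g j) -> agrees h' (run A' g j) -> h x != h' x ->
  phi_min cost <= OPT.
Proof.
move=> hH h'H live Ax hg h'g hh'.
apply: (phi_min_le_costs Y2 hh').
  exact: query_cost_le_OPT hH live Ax hg.
exact: query_cost_le_OPT h'H live Ax h'g.
Qed.

Lemma adversary_run_stops S g :
  exists k, (A' (run A' g k) == None) || (V H (S :|: run A' g k) == set0).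
Proof.
pose Vk k := V H (S :|: run A' g k).
have Vk_sub m n : (m <= n)%N -> Vk n \subset Vk m.
  by move=> mn; apply/V_subset/setUS/run_sub.
have [k stable] := @nonincreasing_nat_stable (fun n => #|Vk n|)
  (fun m n mn => subset_leq_card (Vk_sub m n mn)).
have [Vk0|[h hV]] := set_0Vmem (Vk k); first by exists k; rewrite -/(Vk k) Vk0 eqxx orbT.
have hg m : agrees h (run A' g m).
  have : h \in Vk (maxn k m).
    suff -> : Vk (maxn k m) = Vk k by [].
    apply/eqP; rewrite eqEcard Vk_sub ?leq_maxl //=.
    by rewrite (stable _ (leq_maxl k m)).
  move=> /V_memP[_ hS] p pm; apply: hS.
  by rewrite inE (subsetP (run_sub _ _ (leq_maxr k m))) ?orbT.
have /V_memP[hH _] := hV.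
have [m Am] := A'_feas.1 h hH; exists m.
by rewrite -(run_agree (hg m) (leqnn m)) Am.
Qed.

Lemma last_query_cost S g k x h : (forall x, exists2 h, h \in V H S & h x = g x) ->
  (forall j, (j < k)%N -> A' (run A' g j) != None) -> A' (run A' g k) = Some x ->
  h \in V H (S :|: run A' g k) -> V H (S :|: run A' g k.+1) = set0 ->
  cost x (g x) <= K * OPT.
Proof.
move=> g_wit live Ax /V_memP[hH hST] VT0.
have hg : agrees h (run A' g k) by move=> p pT; apply: hST; rewrite inE pT orbT.
have R_route : cost x (g x) <= R_cost cost * OPT.
  apply: le_trans (R_cost_le cost_gt0 x (g x) (h x)) _.
  rewrite ler_wpM2l ?(le_trans ler01 (R_cost_ge1 cost_gt0 Y2 x0)) //.
  exact: query_cost_le_OPT hH live Ax hg.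
have g_route : cost x (g x) <= g_cost cost * OPT.
  have [h' h'V h'x] := g_wit x; have /V_memP[h'H h'S] := h'V.
  have h'g : ~ agrees h' (run A' g k.+1).
    move=> h'g; suff: h' \in V H (S :|: run A' g k.+1) by rewrite VT0 inE.
    by apply/V_memP; split=> // p; rewrite inE => /orP[/h'S|/h'g].
  have [j [xj [jk Axj h'j h'xj]]] := first_disagreement h'g.
  have jk' : (j < k)%N.
    rewrite ltn_neqAle -ltnS jk andbT; apply/eqP => jE.
    by move: Axj; rewrite jE Ax => -[xE]; rewrite -xE h'x eqxx in h'xj.
  have hj : agrees h (run A' g j).
    by move=> p /(subsetP (run_sub _ _ (ltnW jk'))) /hg.
  have hxj : h xj = g xj.
    by apply: (hg (xj, g xj)); apply: (subsetP (run_sub _ _ jk')); rewrite (run_some Axj) setU11.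
  have live_j i : (i < j)%N -> A' (run A' g i) != None.
    by move=> ij; apply: live; exact: ltn_trans ij jk'.
  have hh'j : h xj != h' xj by rewrite hxj eq_sym.
  have phi_OPT := phi_min_le_OPT hH h'H live_j Axj hj h'j hh'j.
  apply: le_trans (cost_le_g_phi_min cost_gt0 Y2 x0 x (g x)) _.
  by rewrite ler_wpM2l // (le_trans ler01 (g_cost_ge1 cost_gt0 Y2 x0)).
by rewrite minEle; case: ifP.
Qed.

Lemma adversary_prefix S g : (forall x, exists2 h, h \in V H S & h x = g x) ->
  exists T, [/\ agrees g T, Q <= f (S :|: T) & costS cost T <= 2 * K * OPT].
Proof.
move=> g_wit; have [k stop k_min] := ex_minnP (adversary_run_stops S g).
have live j : (j < k)%N -> A' (run A' g j) != None /\ V H (S :|: run A' g j) != set0.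
  by move=> jk; apply/andP; rewrite -negb_or; apply/negP => /k_min; rewrite leqNgt jk.
have OPT_nneg := OPT_ge0; have OPT_le := OPT_le_K_OPT; rewrite -mulrA.
have [VT0|VT] := eqVneq (V H (S :|: run A' g k)) set0; last first.
  have /set0Pn[h /[dup] hV /V_memP[hH hST]] := VT.
  have Ak : A' (run A' g k) = None by apply/eqP; move: stop; rewrite (negbTE VT) orbF.
  have hg : agrees h (run A' g k) by move=> p pT; apply: hST; rewrite inE pT orbT.
  have ShT := Sh_agree_run hg Ak (fun j jk => (live j jk).1).
  exists (run A' g k); split; first exact: agrees_run.
    by apply: le_trans (A'_feas.2 h hH) _; rewrite ShT; apply: f_mono; exact: subsetUr.
  by rewrite -ShT; apply: le_trans (costS_Sh_le_OPT hH) _; lra.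
exists (run A' g k); split; [exact: agrees_run | exact: f_ca |].
case: k stop k_min live VT0 => [|k] _ _ live VT0; first by rewrite /costS big_set0; lra.
have [Ak /set0Pn[h hV]] := live k (ltnSn k).
case Ax: (A' (run A' g k)) Ak => [x|] // _.
have /V_memP[hH hST] := hV.
have hg : agrees h (run A' g k) by move=> p pT; apply: hST; rewrite inE pT orbT.
have live' j : (j < k)%N -> A' (run A' g j) != None by move=> jk; exact: (live j (leqW jk)).1.
have T_OPT : costS cost (run A' g k) <= OPT.
  apply: le_trans _ (costS_Sh_le_OPT hH); apply: (costS_sub cost_gt0).
  exact: subset_trans (subsetUr _ _) (query_sub_Sh (A'_feas.1 h hH) hg live' Ax).
have x_cost := last_query_cost g_wit live' Ax hV VT0.
rewrite (run_some Ax); apply: le_trans (costS_setU1_le cost_gt0 _ _) _.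
by rewrite /=; lra.
Qed.

Lemma gain_le_max_utility S : f S < Q ->
  Q - f S <= maxseq [seq u x S | x <- enum X] * (2 * K * OPT).
Proof.
move=> fS; have VS : V H S != set0 by apply/eqP => /f_ca; rewrite leNgt fS.
have [hx hx_att] := choice (fun x => utility_attained cost f Q x VS).
pose g := [ffun x => hx x x].
have g_wit x : exists2 h, h \in V H S & h x = g x.
  by exists (hx x); [exact: (hx_att x).1 | rewrite ffunE].
have u_g x : u x S = delta fQ (x, g x) S / cost x (g x).
  by rewrite ffunE; exact: (hx_att x).2.
have [T [gT QT T_cost]] := adversary_prefix g_wit.
have gain_sum : Q - f S <= \sum_(z in T) delta fQ z S.
  have := submodular_gain_le_sum (truncation_monotone Q f_mono)
    (truncation_submodular Q f_mono f_sub) S T.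
  by rewrite /= (min_idPr QT) (min_idPl (ltW fS)).
apply: le_trans gain_sum _.
apply: le_trans (_ : _ <= maxseq [seq u x S | x <- enum X] * costS cost T) _.
  rewrite /costS mulr_sumr; apply: ler_sum => -[x y] /gT /= <-.
  rewrite -[delta _ _ _](divfK (lt0r_neq0 (cost_gt0 x (g x)))) -u_g.
  by apply: ler_wpM2r; [exact: ltW | exact: max_utility_ge].
by rewrite ler_wpM2l ?(max_utility_ge0 H Q cost_gt0 f_mono S).
Qed.

End Adversary.

Section Greedy.
Variables (R : realType) (X Y : finType) (H : {set {ffun X -> Y}})
  (cost : X -> Y -> R) (f : {set X * Y} -> R) (Q eta alpha B : R) (A : algo X Y).
Hypotheses (cost_gt0 : forall x y, 0 < cost x y) (Q_gt0 : 0 < Q) (eta_gt0 : 0 < eta)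
  (f_mono : monotone f) (f0 : f set0 = 0) (f_gap : forall S, Q - eta <= f S -> Q <= f S)
  (alpha_ge1 : 1 <= alpha) (A_greedy : approx_greedy f Q alpha (utility cost H f Q) A).
Local Notation fQ := (fun T => Num.min (f T) Q).
Local Notation u := (utility cost H f Q).
Local Notation maxu S := (maxseq [seq u x S | x <- enum X]).
Hypothesis gain_le : forall S, f S < Q -> Q - f S <= maxu S * B.
Local Notation M := (alpha * B).

Lemma M_gt0 : 0 < M.
Proof.
have := @gain_le set0; rewrite f0 subr0 => /(_ Q_gt0) Q_le.
apply: mulr_gt0; first exact: lt_le_trans ltr01 alpha_ge1.
rewrite ltNge; apply/negP => B_le0.
have : maxu set0 * B <= 0 by rewrite mulr_ge0_le0 ?(max_utility_ge0 H Q cost_gt0 f_mono).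
by move=> /(le_trans Q_le); rewrite leNgt Q_gt0.
Qed.

Lemma greedy_step h t : h \in H -> f (run A h t) < Q ->
  exists x, [/\ A (run A h t) = Some x, (x, h x) \notin run A h t &
    cost x (h x) * (Q - fQ (run A h t)) <= M * (fQ (run A h t.+1) - fQ (run A h t))].
Proof.
move=> hH ft; set S := run A h t.
have [x [Ax u_x]] := (A_greedy S).2 ft.
have hV : h \in V H S by apply/V_memP; split=> //; exact: agrees_run.
have c_gt0 := cost_gt0 x (h x).
have alpha_gt0 : 0 < alpha := lt_le_trans ltr01 alpha_ge1.
have B_gt0 : 0 < B by rewrite -(pmulr_rgt0 _ alpha_gt0) M_gt0.
have maxu_le : maxu S <= alpha * u x S.
  by rewrite -(mulVKf (lt0r_neq0 alpha_gt0) (maxu S)) ler_pM2l.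
have u_c : u x S * cost x (h x) <= delta fQ (x, h x) S.
  by rewrite -ler_pdivlMr //; exact: utility_le.
have progress : cost x (h x) * (Q - f S) <= M * delta fQ (x, h x) S.
  apply: le_trans (_ : _ <= cost x (h x) * (alpha * u x S * B)) _.
    rewrite ler_pM2l //; apply: le_trans (gain_le ft) _.
    by rewrite ler_pM2r.
  rewrite (_ : _ * (_ * _ * B) = M * (u x S * cost x (h x))); last by ring.
  by rewrite ler_pM2l ?M_gt0.
have fQS : Num.min (f S) Q = f S := min_idPl (ltW ft).
exists x; split=> //; last by move: progress; rewrite (run_some Ax) /delta /= fQS.
apply/negP => xS; move: progress; rewrite /delta (setUidPr _) ?sub1set // subrr mulr0.
by rewrite pmulr_rle0 // subr_le0 leNgt ft.
Qed.

Lemma greedy_run_card h t : h \in H -> (forall j, (j < t)%N -> f (run A h j) < Q) ->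
  (t <= #|run A h t|)%N.
Proof.
move=> hH; elim: t => // t IH below.
have [x [Ax xS _]] := greedy_step hH (below t (ltnSn t)).
rewrite (run_some Ax) cardsU1 xS add1n ltnS; apply: IH => j jt; exact: below j (leqW jt).
Qed.

Lemma greedy_terminates : terminates H A.
Proof.
move=> h hH; have [[k Qk]|never] := pselect (exists k, Q <= f (run A h k)).
  by exists k; rewrite (A_greedy _).1.
have below j : f (run A h j) < Q.
  by rewrite ltNge; apply/negP => Qj; apply: never; exists j.
have := greedy_run_card (t := #|[set: X * Y]|.+1) hH (fun j _ => below j).
by rewrite ltnNge subset_leq_card ?subsetT.
Qed.

Lemma greedy_potential h t : h \in H -> (forall j, (j < t)%N -> f (run A h j) < Q) ->
  Q - fQ (run A h t) <= Q * expR (- (costS cost (run A h t) / M)).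
Proof.
move=> hH; elim: t => [|t IH] below.
  by rewrite /= f0 /costS big_set0 mul0r oppr0 expR0 mulr1 (min_idPl (ltW Q_gt0)) subr0.
have [x [Ax xS step]] := greedy_step hH (below t (ltnSn t)).
have IH' := IH (fun j jt => below j (leqW jt)).
have fQ_le : fQ (run A h t) <= Q by rewrite /= ge_min lexx orbT.
apply: le_trans (gap_decay M_gt0 fQ_le step) _.
rewrite (run_some Ax) costS_setU1 //= (mulrDl (cost x (h x))) opprD expRD.
rewrite [expR _ * _]mulrC mulrA.
by rewrite ler_wpM2r ?expR_ge0.
Qed.

Lemma greedy_cost_le h : h \in H -> costS cost (Sh A h) <= M * (ln (Q / eta) + 1).
Proof.
move=> hH; have [m [-> Am live]] := Sh_spec (greedy_terminates hH).
have below j : (j < m)%N -> f (run A h j) < Q.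
  by move=> jm; rewrite ltNge; apply: contra (live j jm) => /(A_greedy _).1 ->.
case: m Am live below => [|m] Am _ below.
  have f0Q : f set0 < Q by rewrite f0.
  by have [x [Ax _]] := (A_greedy _).2 f0Q; rewrite Ax in Am.
have fm := below m (ltnSn m).
have [x [Ax xS step]] := greedy_step hH fm.
have pot := greedy_potential hH (fun j jm => below j (leqW jm)).
rewrite (run_some Ax) costS_setU1 // mulrDr mulr1.
move: step pot; rewrite /= (min_idPl (ltW fm)) => step pot.
have eta_lt : eta < Q - f (run A h m).
  rewrite ltNge; apply/negP => D_le.
  have : Q <= f (run A h m) by apply: f_gap; lra.
  by rewrite leNgt fm.
have c_le : cost x (h x) <= M.
  have fQ_le : Num.min (f (run A h m.+1)) Q <= Q by rewrite ge_min lexx orbT.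
  have D_gt0 : 0 < Q - f (run A h m) := lt_trans eta_gt0 eta_lt.
  rewrite -(ler_pM2r D_gt0); apply: le_trans step _.
  by rewrite ler_pM2l ?M_gt0 // lerD2r.
have C_lt : costS cost (run A h m) < M * ln (Q / eta).
  exact: lt_mul_ln_of_lt_expR eta_gt0 M_gt0 (lt_le_trans eta_lt pot).
lra.
Qed.

Lemma greedy_costA_le : costA cost H A <= M * (ln (Q / eta) + 1).
Proof.
have eta_lt_Q : eta < Q.
  rewrite ltNge; apply/negP => Q_le; have : Q <= f set0 by apply: f_gap; rewrite f0 subr_le0.
  by rewrite f0 leNgt Q_gt0.
have ln_ge0 : 0 <= ln (Q / eta) by rewrite ltW // ln_gt0 // ltr_pdivlMr // mul1r.
apply: maxseq_le => [|_ /mapP[h hH ->]]; last by apply: greedy_cost_le; rewrite mem_enum in hH.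
by apply: mulr_ge0; [exact: ltW M_gt0 | exact: addr_ge0 ln_ge0 ler01].
Qed.

End Greedy.

Theorem theorem3 (R : realType) (X Y : finType)
  (H : {set {ffun X -> Y}}) (cost : X -> Y -> R)
  (f : {set X * Y} -> R) (Q eta alpha : R) (A : algo X Y) :
  (1 < #|Y|)%N ->
  (forall x y, 0 < cost x y) ->
  (forall S, 0 <= f S) ->
  0 < Q -> 0 < eta ->
  monotone f -> submodular f -> f set0 = 0 ->
  (forall S, Q - eta <= f S -> Q <= f S) ->
  consistency_aware H f Q ->
  1 <= alpha ->
  approx_greedy f Q alpha (utility cost H f Q) A ->
  forall A' : algo X Y, feasible H f Q A' ->
    terminates H A /\
    costA cost H A <=
      2 * Num.min (g_cost cost) (R_cost cost) * alpha * (ln (Q / eta) + 1)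
        * costA cost H A'.
Proof.
move=> Y2 cost_gt0 _ Q_gt0 eta_gt0 f_mono f_sub f0 f_gap f_ca alpha_ge1 A_greedy A' A'_feas.
have f0Q : f set0 < Q by rewrite f0.
have [x0 _] := (A_greedy set0).2 f0Q.
have gain := gain_le_max_utility x0 cost_gt0 Y2 f_mono f_sub f_ca A'_feas.
split; first exact: greedy_terminates cost_gt0 Q_gt0 f_mono f0 alpha_ge1 A_greedy gain.
set K := Num.min _ _; set OPT := costA cost H A'.
have -> : 2 * K * alpha * (ln (Q / eta) + 1) * OPT = alpha * (2 * K * OPT) * (ln (Q / eta) + 1).
  by ring.
exact: greedy_costA_le cost_gt0 Q_gt0 eta_gt0 f_mono f0 f_gap alpha_ge1 A_greedy gain.
Qed.
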